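(* Let $K$ be a number field and let $\alpha=p/q$ be a positive rational number with $\gcd(p,q)=1$ which is not an integer and is not of the form $1/n$ for an integer $n$. Let $F\in K((x))$ be a Laurent series such that there exist $d\ge 0$ and polynomials $P_0,\dots,P_d\in K[x]$ with $P_d\ne0$ and $\sum_{i=0}^d P_i(x)F(x^{\alpha^i})=0$. Then $F(x^{\alpha^i})$ is a Laurent series (i.e. has support contained in $\mathbb{Z}$ and bounded below) for each $i=0,1,\dots,d$.
   Context: For a Laurent series $F=\sum_i f_ix^i$ and $\gamma>0$, $F(x^\gamma)=\sum_i f_i x^{\gamma i}$, regarded as a Hahn series (formal series with well-ordered support in $\mathbb{R}$); the equation holds in the field of such Hahn series over $K$. *)

From HB Require Import structures.
From mathcomp Require Import all_boot all_order all_algebra all_field.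
Set Implicit Arguments. Unset Strict Implicit. Unset Printing Implicit Defensive.
Import Order.TTheory GRing.Theory Num.Theory.
Local Open Scope ring_scope.

(* A Laurent series F = sum_n f_n x^n in K((x)) is given by its coefficient
   function f : int -> K together with a lower bound on its support. *)
Definition laurent_support_bounded (K : fieldType) (f : int -> K) : Prop :=
  exists N : int, forall n : int, n < N -> f n = 0.

(* Coefficient function (on rational exponents) of the Hahn series F(x^g)
   = sum_n f_n x^(g n): the coefficient at exponent r is f_(r/g) if r/g is
   an integer and 0 otherwise (g > 0). *)
Definition subst_coef (K : fieldType) (f : int -> K) (g : rat) (r : rat) : K :=
  if denq (r / g) == 1 then f (numq (r / g)) else 0.

Definition polyMul_coef (K : fieldType) (P : {poly K}) (h : rat -> K) (e : rat) : K :=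
  \sum_(k < size P) P`_k * h (e - k%:R).

Definition is_laurent_series (K : fieldType) (h : rat -> K) : Prop :=
  (forall r : rat, h r != 0 -> r \is a Num.int) /\
  (exists N : rat, forall r : rat, r < N -> h r = 0).

From HB Require Import structures.
From mathcomp Require Import all_boot all_order all_algebra all_field.
From mathcomp Require Import zify ring.
Set Implicit Arguments. Unset Strict Implicit. Unset Printing Implicit Defensive.

(* Write alpha = p/q in lowest terms. By induction on t <= d, q^t divides every
   exponent n in the support of F; for t = d this puts the support of
   F(x^(alpha^i)) = sum f_n x^(p^i n / q^i) inside Z for all i <= d.
   For the induction step, let n be the least exponent of F not divisible by
   q^(t+1) and k0 the least exponent of P_d.  The monomial x^(alpha^d n + k0)
   then occurs only once in the equation, in P_d(x) F(x^(alpha^d)): any other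
   occurrence x^k * x^(alpha^i m) gives, after clearing denominators,
   p^d n + (k0 - k) q^d = p^i q^(d-i) m.  As p is prime to q and q^(t+1)
   divides q^d but not n, q^(t+1) does not divide the left side, whereas it
   divides the right side when i < d.  Hence i = d, so q^(t+1) does not divide
   m and m >= n; this forces k <= k0, i.e. k = k0. *)
Import Order.TTheory GRing.Theory Num.Theory.
Local Open Scope ring_scope.

Lemma int_ex_min (Q : pred int) (N : int) :
  (forall n, Q n -> N <= n) -> (exists n, Q n) ->
  exists2 n, Q n & forall m, Q m -> n <= m.
Proof.
move=> lbQ [n Qn].
have shiftK m : Q m -> N + `|m - N|%N%:Z = m by move=> /lbQ; lia.
have exQ : exists k : nat, Q (N + k%:Z) by exists `|n - N|%N; rewrite shiftK.
case: (ex_minnP exQ) => k Qk mink; exists (N + k%:Z) => // m Qm.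
have := mink `|m - N|%N; rewrite shiftK // => /(_ Qm); have := lbQ m Qm; lia.
Qed.

Lemma subst_coefM (K : fieldType) (f : int -> K) (g : rat) (m : int) :
  g != 0 -> subst_coef f g (g * m%:~R) = f m.
Proof. by move=> g0; rewrite /subst_coef [g * _]mulrC mulfK // denq_int eqxx numq_int. Qed.

Lemma subst_coef_neq0 (K : fieldType) (f : int -> K) (g r : rat) :
  g != 0 -> subst_coef f g r != 0 -> exists2 m : int, r = g * m%:~R & f m != 0.
Proof.
rewrite /subst_coef => g0; case: ifP => [den1 fm|]; last by rewrite eqxx.
have /intrP [m rgE] : r / g \is a Num.int by rewrite Qint_def.
exists m; first by rewrite -rgE mulrC divfK.
by rewrite rgE numq_int in fm.
Qed.

Lemma subst_coef_bounded (K : fieldType) (f : int -> K) (g : rat) :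
  0 < g -> laurent_support_bounded f ->
  exists N : rat, forall r, r < N -> subst_coef f g r = 0.
Proof.
move=> g0 [N fN]; exists (g * N%:~R) => r ltrN.
apply: contraTeq ltrN => /(subst_coef_neq0 (lt0r_neq0 g0)) [m -> fm].
by rewrite -leNgt ler_pM2l // ler_int leNgt; apply: contra fm => /fN ->.
Qed.

Lemma Qint_exprMz (a : rat) (i : nat) (m : int) :
  (denq a ^+ i %| m)%Z -> a ^+ i * m%:~R \is a Num.int.
Proof.
move=> dvd_m; rewrite -[a in a ^+ i]divq_num_den expr_div_n mulrAC.
have -> : (numq a)%:~R ^+ i * m%:~R = (numq a ^+ i * m)%:~R :> rat.
  by rewrite rmorphM rmorphXn.
have -> : (denq a)%:~R ^+ i = (denq a ^+ i)%:~R :> rat by rewrite rmorphXn.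
exact/Qint_dvdz/dvdz_mull.
Qed.

Lemma eq_intr_clear_den (p q n m c : int) (i j : nat) : q != 0 ->
  (p%:~R / q%:~R : rat) ^+ (i + j) * n%:~R + c%:~R = (p%:~R / q%:~R) ^+ i * m%:~R ->
  p ^+ (i + j) * n + c * q ^+ (i + j) = p ^+ i * q ^+ j * m.
Proof.
move=> q0 E; apply: (@intr_inj rat); rewrite !rmorphD !rmorphM !rmorphXn /=.
have q0' : q%:~R != 0 :> rat by rewrite intr_eq0.
move: E; rewrite !expr_div_n !exprD => E.
rewrite [RHS](_ : _ = (p%:~R ^+ i / q%:~R ^+ i * m%:~R) * (q%:~R ^+ i * q%:~R ^+ j)).
  by rewrite -E; field; rewrite !expf_neq0.
by field; rewrite expf_neq0.
Qed.

Lemma dvdz_coprimeX_mulD (p q n c : int) (t d : nat) : coprimez q p -> (t <= d)%N ->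
  (q ^+ t %| p ^+ d * n + c * q ^+ d)%Z = (q ^+ t %| n)%Z.
Proof.
move=> copqp le_td; have dvd_cq := dvdz_mull c (dvdz_exp2l q le_td).
by rewrite (rpredDr _ dvd_cq) Gauss_dvdzr // coprimezXl ?coprimezXr.
Qed.

Section SupportDivisibility.

Variables (K : fieldType) (alpha : rat) (f : int -> K) (d : nat) (P : nat -> {poly K}).
Hypothesis alpha_gt0 : 0 < alpha.
Hypothesis f_bounded : laurent_support_bounded f.
Hypothesis Pd_neq0 : P d != 0.
Hypothesis mahler_eq : forall e : rat,
  \sum_(i < d.+1) polyMul_coef (P i) (subst_coef f (alpha ^+ i)) e = 0.

Let p := numq alpha.
Let q := denq alpha.

Section MinimalTerm.

Variables (t : nat) (ns : int) (k0 : nat).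
Hypothesis dvd_supp : forall m, f m != 0 -> (q ^+ t %| m)%Z.
Hypothesis ndvd_ns : ~~ (q ^+ t.+1 %| ns)%Z.
Hypothesis min_ns : forall m, f m != 0 -> ~~ (q ^+ t.+1 %| m)%Z -> ns <= m.
Hypothesis min_k0 : forall k, (P d)`_k != 0 -> (k0 <= k)%N.

Lemma mahler_exponent_unique (i k : nat) (m : int) :
  (t < d)%N -> (i <= d)%N -> (P i)`_k != 0 -> f m != 0 ->
  alpha ^+ i * m%:~R + k%:R = alpha ^+ d * ns%:~R + k0%:R -> i = d /\ k = k0.
Proof.
move=> lt_td le_id Pik fm E.
have ndvd_comb (c : int) : ~~ (q ^+ t.+1 %| p ^+ d * ns + c * q ^+ d)%Z.
  by rewrite dvdz_coprimeX_mulD // coprimez_sym; exact: coprime_num_den.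
have E' : (p%:~R / q%:~R : rat) ^+ (i + (d - i)) * ns%:~R + (k0%:Z - k%:Z)%:~R
          = (p%:~R / q%:~R) ^+ i * m%:~R.
  by rewrite divq_num_den subnKC // rmorphB /= -!pmulrn addrA -E addrK.
have := eq_intr_clear_den (denq_neq0 alpha) E'; rewrite subnKC // -/q => EZ.
have [j0|j_gt0] := posnP (d - i).
  have i_eq : i = d by apply/eqP; rewrite eqn_leq le_id -subn_eq0 j0.
  move: EZ Pik; rewrite j0 expr0 mulr1 i_eq => EZ Pdk.
  have le_nsm : ns <= m.
    apply: min_ns fm _; apply: contra (ndvd_comb (k0%:Z - k%:Z)) => dvd_m.
    by rewrite EZ dvdz_mull.
  have : 0 <= (k0%:Z - k%:Z) * q ^+ d.
    have -> : (k0%:Z - k%:Z) * q ^+ d = p ^+ d * (m - ns).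
      by rewrite mulrBr -EZ addrAC subrr add0r.
    by apply: mulr_ge0; rewrite ?subr_ge0 // exprn_ge0 // ltW // numq_gt0.
  rewrite pmulr_lge0 ?exprn_gt0 ?(denq_gt0 alpha) // subr_ge0 lez_nat => le_kk0.
  by split=> //; apply/eqP; rewrite eqn_leq le_kk0 min_k0.
case/negP: (ndvd_comb (k0%:Z - k%:Z)); rewrite EZ -mulrA exprS.
apply/dvdz_mull/dvdz_mul; last exact: dvd_supp.
by rewrite -(prednK j_gt0) exprS; apply/dvdz_mulr/dvdzz.
Qed.

Lemma mahler_coef_minimal : (t < d)%N -> (P d)`_k0 != 0 ->
  \sum_(i < d.+1) polyMul_coef (P i) (subst_coef f (alpha ^+ i)) (alpha ^+ d * ns%:~R + k0%:R)
  = (P d)`_k0 * f ns.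
Proof.
move=> lt_td Pk0; set e := alpha ^+ d * ns%:~R + k0%:R.
have term_eq0 (i k : nat) : (i <= d)%N -> (i != d) || (k != k0) ->
    (P i)`_k * subst_coef f (alpha ^+ i) (e - k%:R) = 0.
  move=> le_id; apply: contraTeq; rewrite negb_or !negbK mulf_eq0 negb_or => /andP[Pik].
  case/(subst_coef_neq0 (expf_neq0 _ (lt0r_neq0 alpha_gt0))) => m Em fm.
  have E : alpha ^+ i * m%:~R + k%:R = e by rewrite -Em subrK.
  by have [-> ->] := mahler_exponent_unique lt_td le_id Pik fm E; rewrite !eqxx.
rewrite (bigD1 ord_max) //= big1 ?addr0 => [|i ne_i]; last first.
  rewrite /polyMul_coef big1 // => k _; apply: term_eq0; first exact: ltnSE.
  by rewrite -val_eqE in ne_i; rewrite ne_i.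
have k0_lt : (k0 < size (P d))%N.
  by rewrite ltnNge; apply: contra Pk0 => /(nth_default 0) ->.
rewrite /polyMul_coef (bigD1 (Ordinal k0_lt)) //= big1 ?addr0 => [|k ne_k]; last first.
  by rewrite -val_eqE /= in ne_k; rewrite term_eq0 // ne_k orbT.
by rewrite addrK subst_coefM // expf_neq0 // lt0r_neq0.
Qed.

End MinimalTerm.

Lemma support_dvdz_step (t : nat) : (t < d)%N ->
  (forall m, f m != 0 -> (q ^+ t %| m)%Z) ->
  forall n, f n != 0 -> (q ^+ t.+1 %| n)%Z.
Proof.
move=> lt_td dvd_supp n fn; apply: contraT => ndvd_n; have [N fN] := f_bounded.
pose Q := [pred m | (f m != 0) && ~~ (q ^+ t.+1 %| m)%Z].
have [ns /andP[fns ndvd_ns] min_ns] : exists2 ns, Q ns & forall m, Q m -> ns <= m.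
  apply: (@int_ex_min _ N); last by exists n; apply/andP.
  by move=> m /andP[fm _]; rewrite leNgt; apply: contra fm => /fN ->.
have [k0 Pk0 min_k0] : exists2 k0, (P d)`_k0 != 0 & forall k, (P d)`_k != 0 -> (k0 <= k)%N.
  have exk : exists k, (P d)`_k != 0.
    by exists (size (P d)).-1; rewrite -lead_coefE lead_coef_eq0.
  by case: (ex_minnP exk) => k0; exists k0.
have min_ns' m : f m != 0 -> ~~ (q ^+ t.+1 %| m)%Z -> ns <= m.
  by move=> fm ndvd_m; apply: min_ns; apply/andP.
move: (mahler_eq (alpha ^+ d * ns%:~R + k0%:R)).
rewrite (mahler_coef_minimal dvd_supp ndvd_ns min_ns' min_k0 lt_td Pk0) => /eqP.
by rewrite mulf_eq0 (negbTE Pk0) (negbTE fns).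
Qed.

Lemma support_dvdz (t : nat) : (t <= d)%N -> forall m, f m != 0 -> (q ^+ t %| m)%Z.
Proof.
elim: t => [|t IH] le_td m fm; first by rewrite expr0 dvd1z.
apply: (support_dvdz_step le_td _ fm) => n; exact: IH (ltnW le_td) n.
Qed.

End SupportDivisibility.

Theorem mainTheorem5 (K : fieldExtType rat) (alpha : rat)
    (f : int -> K) (d : nat) (P : nat -> {poly K}) :
  0 < alpha ->
  alpha \isn't a Num.int ->
  alpha^-1 \isn't a Num.int ->
  laurent_support_bounded f ->
  P d != 0 ->
  (forall e : rat,
     \sum_(i < d.+1) polyMul_coef (P i) (subst_coef f (alpha ^+ i)) e = 0) ->
  forall i : nat, (i <= d)%N -> is_laurent_series (subst_coef f (alpha ^+ i)).
Proof.
move=> alpha_gt0 _ _ f_bounded Pd_neq0 mahler_eq i le_id; split.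
  move=> r /(subst_coef_neq0 (expf_neq0 _ (lt0r_neq0 alpha_gt0))) [m -> fm].
  apply/Qint_exprMz/(dvdz_trans (dvdz_exp2l _ le_id)).
  exact: (support_dvdz alpha_gt0 f_bounded Pd_neq0 mahler_eq (leqnn d) fm).
exact: subst_coef_bounded (exprn_gt0 i alpha_gt0) f_bounded.
Qed.
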